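(* Let $\pi_1,\dots,\pi_m$ be permutations of order at least two with $|\pi_1|\ge|\pi_2|\ge\dots\ge|\pi_m|$. If there exist non-zero reals $t_1,\dots,t_m$ with $\sum_{i\in[m]}t_iP_{\pi_i}=0$, then $m\ge2$ and $|\pi_1|=|\pi_2|$.
   Context: A $k$-permutation is a bijection of $[k]=\{1,\dots,k\}$; $|\pi|$ denotes its order. The gradient polynomial of a $k$-permutation $\pi$ is $P_\pi(\alpha,\beta)=k!\sum_{m\in[k]}\left(\frac{k-m}{1-\alpha}-\frac{m-1}{\alpha}\right)\left(\frac{k-\pi(m)}{1-\beta}-\frac{\pi(m)-1}{\beta}\right)\frac{\alpha^{m-1}(1-\alpha)^{k-m}\beta^{\pi(m)-1}(1-\beta)^{k-\pi(m)}}{(m-1)!(k-m)!(\pi(m)-1)!(k-\pi(m))!}$, a polynomial in $\alpha,\beta$; the equation $\sum t_iP_{\pi_i}=0$ is an identity of polynomials. *)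

From mathcomp Require Import all_boot all_order all_algebra all_fingroup.
From mathcomp Require Import reals.
Set Implicit Arguments. Unset Strict Implicit. Unset Printing Implicit Defensive.
Import Order.TTheory GRing.Theory Num.Theory.
Local Open Scope ring_scope.

(* For a k-permutation and m in [k], the polynomial
     ((k-m)/(1-x) - (m-1)/x) * x^(m-1) (1-x)^(k-m)
   written without division (cancelling the denominators):
     (k-m) x^(m-1) (1-x)^(k-m-1) - (m-1) x^(m-2) (1-x)^(k-m).
   (Natural-number truncation in the exponents only occurs when the
   corresponding coefficient k-m resp. m-1 is zero.) *)
Definition gfactor {R : realType} (k m : nat) (x : R) : R :=
  (k - m)%:R * x ^+ (m - 1) * (1 - x) ^+ (k - m - 1)
  - (m - 1)%:R * x ^+ (m - 2) * (1 - x) ^+ (k - m).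

(* Gradient polynomial of a k-permutation pi (pi : 'S_k acts on 'I_k = {0..k-1};
   the element m in [k] corresponds to i : 'I_k with m = i+1, and
   pi(m) = (pi i)+1), evaluated at (alpha, beta). *)
Definition gradP {R : realType} (k : nat) (pi : 'S_k) (a b : R) : R :=
  (k`!)%:R * \sum_(i < k)
    (gfactor k i.+1 a * gfactor k (pi i).+1 b
     / ((i`!)%:R * ((k - i.+1)`!)%:R * (((pi i : nat)`!)%:R)
        * ((k - (pi i).+1)`!)%:R)).

Definition anyperm := {k : nat & 'S_k}.
Definition pord (p : anyperm) : nat := projT1 p.
Definition gradPa {R : realType} (p : anyperm) (a b : R) : R :=
  gradP (projT2 p) a b.

From mathcomp Require Import all_boot all_order all_algebra all_fingroup.
From mathcomp Require Import reals.
From mathcomp Require Import ring zify.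
Set Implicit Arguments. Unset Strict Implicit. Unset Printing Implicit Defensive.
Import Order.TTheory GRing.Theory Num.Theory.
Local Open Scope ring_scope.

(* For a k-permutation pi, P_pi(a, b) = k! sum_(i<k) B_i(a) B_(pi i)(b), where
   B_i = A_i - A_(i-1) with A_j := x^j (1-x)^(k-2-j) / (j! (k-2-j)!) for
   0 <= j <= k-2 and A_j := 0 otherwise; all B_i have degree at most k-2.
   If |pi_1| = K were strictly largest, the coefficient of a^(K-2) in
   sum_i t_i P_(pi_i) would come from pi_1 alone and equal
   t_1 K! sum_i c_i B_(pi_1 i)(b), with c_i the x^(K-2)-coefficient of B_i.
   Since the A_j are linearly independent, sum_i u_i B_i = 0 forces all u_i to
   be equal; so sum_i c_i B_(pi_1 i) = 0 would make all c_i equal, hence 0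
   because sum_i B_i = 0. But c_0 is the leading coefficient of
   (1-x)^(K-2) / (K-2)!. *)

Lemma poly_neq0_horner (R : numDomainType) (p : {poly R}) :
  p != 0 -> exists x, p.[x] != 0.
Proof.
move=> p0; pose xs := [seq i%:R : R | i <- iota 0 (size p)].
have /hasP[x _ px] : has (fun x => ~~ root p x) xs; last by exists x.
apply: contraNT p0 => /hasPn xs_roots; apply/eqP/(@roots_geq_poly_eq0 _ _ xs).
- by apply/allP => x /xs_roots /negPn.
- by rewrite map_inj_uniq ?iota_uniq //; apply: mulrIn; rewrite oner_eq0.
- by rewrite size_map size_iota.
Qed.

Lemma size_oneBX_exp (R : nzRingType) (e : nat) :
  size ((1 - 'X : {poly R}) ^+ e) = e.+1.
Proof. by rewrite -opprB -polyC1 exprNn size_Msign size_exp_XsubC. Qed.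

Lemma triangular_comb_eq0 (R : idomainType) (n : nat)
    (q : nat -> {poly R}) (d : nat -> R) :
  \sum_(j < n) d j *: q j = 0 ->
  (forall j s, (s < j)%N -> (q j)`_s = 0) ->
  (forall j, (j < n)%N -> (q j)`_j != 0) ->
  forall j, (j < n)%N -> d j = 0.
Proof.
move=> dq0 q_lo q_diag; elim/ltn_ind => j IHj jn.
have := congr1 (fun p : {poly R} => p`_j) dq0.
rewrite /= coef0 coef_sum (bigD1 (Ordinal jn)) //= big1 ?addr0 => [|i /eqP ij].
  by rewrite coefZ => /eqP; rewrite mulf_eq0 (negbTE (q_diag j jn)) orbF => /eqP.
rewrite coefZ; case: (ltngtP i j) => [lt_ij|lt_ji|eq_ij].
- by rewrite IHj ?mul0r // (ltn_trans lt_ij).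
- by rewrite q_lo ?mulr0.
- by case: ij; apply: val_inj.
Qed.

Section GradientFactors.
Variable R : numFieldType.

Lemma natr_fact_neq0 (n : nat) : (n`!)%:R != 0 :> R.
Proof. by rewrite pnatr_eq0 -lt0n fact_gt0. Qed.

(* [bern k j] and [gfpoly k i] are A_j and B_i above; B_i is minus the
   derivative of the Bernstein polynomial x^i (1-x)^(k-1-i) / (i! (k-1-i)!). *)
Definition bern (k j : nat) : {poly R} :=
  if (j.+1 < k)%N then
    ((j`!)%:R * ((k - 2 - j)`!)%:R)^-1 *: ('X^j * (1 - 'X) ^+ (k - 2 - j))
  else 0.

Definition gfpoly (k i : nat) : {poly R} :=
  bern k i - (if i is i'.+1 then bern k i' else 0).

Lemma horner_bern (k j : nat) (x : R) : (j.+1 < k)%N ->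
  (bern k j).[x] = x ^+ j * (1 - x) ^+ (k - 2 - j)
                   / ((j`!)%:R * ((k - 2 - j)`!)%:R).
Proof.
move=> jk; rewrite /bern jk hornerZ mulrC.
by rewrite hornerM hornerXn horner_exp hornerD hornerN hornerX hornerC.
Qed.

Lemma bern_out (k j : nat) : (k <= j.+1)%N -> bern k j = 0.
Proof. by rewrite /bern leqNgt => /negbTE ->. Qed.

Lemma size_bern (k j : nat) : (size (bern k j) <= k.-1)%N.
Proof.
rewrite /bern; case: ifP => jk; last by rewrite size_poly0.
rewrite (leq_trans (size_scale_leq _ _)) // size_mul.
- by rewrite size_polyXn size_oneBX_exp; lia.
- by rewrite -size_poly_eq0 size_polyXn.
- by rewrite -size_poly_eq0 size_oneBX_exp.
Qed.

Lemma size_gfpoly (k i : nat) : (size (gfpoly k i) <= k.-1)%N.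
Proof.
rewrite (leq_trans (size_polyD _ _)) // geq_max size_polyN size_bern.
by case: i => [|i]; rewrite ?size_poly0 ?size_bern.
Qed.

Lemma coef_bern_lt (k j s : nat) : (s < j)%N -> (bern k j)`_s = 0.
Proof.
rewrite /bern => sj; case: ifP => _; last by rewrite coef0.
by rewrite coefZ coefXnM sj mulr0.
Qed.

Lemma coef_bern_diag (k j : nat) : (j.+1 < k)%N -> (bern k j)`_j != 0.
Proof.
move=> jk; rewrite /bern jk coefZ coefXnM ltnn subnn -horner_coef0.
rewrite horner_exp !hornerE subr0 expr1n mulr1.
by rewrite invr_eq0 mulf_neq0 ?natr_fact_neq0.
Qed.

Lemma coef_bern0_top (k : nat) : (2 <= k)%N -> (bern k 0)`_(k - 2) != 0.
Proof.
move=> k2; rewrite /bern (_ : (1 < k)%N = true) // coefZ expr0 mul1r subn0.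
rewrite mulf_neq0 ?invr_eq0 ?mulf_neq0 ?natr_fact_neq0 //.
have := lead_coefE ((1 - 'X : {poly R}) ^+ (k - 2)).
rewrite size_oneBX_exp /= => <-.
by rewrite lead_coef_eq0 -size_poly_eq0 size_oneBX_exp.
Qed.

Lemma sum_scale_gfpoly (k : nat) (u : nat -> R) :
  \sum_(j < k) u j *: gfpoly k j = \sum_(j < k.-1) (u j - u j.+1) *: bern k j.
Proof.
case: k => [|k]; first by rewrite !big_ord0.
rewrite /gfpoly; under eq_bigr do rewrite scalerBr.
rewrite sumrB big_ord_recr [X in _ - X]big_ord_recl /=.
rewrite bern_out // !scaler0 addr0 add0r -sumrB.
by apply: eq_bigr => j _; rewrite scalerBl.
Qed.

Lemma sum_gfpoly (k : nat) : \sum_(j < k) gfpoly k j = 0.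
Proof.
under eq_bigr do rewrite -[gfpoly _ _]scale1r.
by rewrite (sum_scale_gfpoly k (fun=> 1)) big1 // => j _; rewrite subrr scale0r.
Qed.

Lemma gfpoly_comb_eq0_const (k : nat) (u : nat -> R) :
  \sum_(j < k) u j *: gfpoly k j = 0 -> forall j, (j < k)%N -> u j = u 0%N.
Proof.
rewrite sum_scale_gfpoly => comb0.
have bern_diag i : (i < k.-1)%N -> (bern k i)`_i != 0.
  by move=> ik; apply: coef_bern_diag; lia.
have du j : (j.+1 < k)%N -> u j = u j.+1.
  move=> jk; apply/eqP; rewrite -subr_eq0; apply/eqP.
  have := triangular_comb_eq0 (d := fun j => u j - u j.+1) comb0.
  by apply; [exact: coef_bern_lt | exact: bern_diag | lia].
by elim=> [//|j IHj] jk; rewrite -du // IHj //; lia.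
Qed.

Lemma perm_comb_gfpoly_neq0 (k : nat) (p : 'S_k) : (2 <= k)%N ->
  \sum_(i < k) (gfpoly k i)`_(k - 2) *: gfpoly k (p i) != 0.
Proof.
move=> k2; apply/eqP => comb0.
pose w (i : 'I_k) := (gfpoly k i)`_(k - 2).
have k0 : (0 < k)%N by lia.
pose i0 := Ordinal k0.
have insubdE (j : 'I_k) : insubd i0 j = j.
  by apply: val_inj; rewrite val_insubd ltn_ord.
pose u j := w ((p^-1)%g (insubd i0 j)).
have u_const : forall j, (j < k)%N -> u j = u 0%N.
  apply: gfpoly_comb_eq0_const; rewrite -[RHS]comb0.
  rewrite [RHS](reindex_inj (@perm_inj _ (p^-1)%g)).
  by apply: eq_bigr => j _; rewrite /u insubdE permKV.
have w_const i : w i = u 0%N by rewrite -(u_const (p i)) // /u insubdE permK.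
have : \sum_(i < k) w i = 0 by rewrite -coef_sum sum_gfpoly coef0.
rewrite (eq_bigr _ (fun i _ => w_const i)) sumr_const card_ord -mulr_natr.
move/eqP; rewrite mulf_eq0 pnatr_eq0 (gtn_eqF k0) orbF -(w_const i0).
by rewrite /w /gfpoly subr0 (negbTE (coef_bern0_top k2)).
Qed.

Definition gradP_poly (k : nat) (p : 'S_k) (b : R) : {poly R} :=
  (k`!)%:R *: \sum_(i < k) (gfpoly k (p i)).[b] *: gfpoly k i.

Lemma size_gradP_poly (k : nat) (p : 'S_k) (b : R) :
  (size (gradP_poly p b) <= k.-1)%N.
Proof.
rewrite (leq_trans (size_scale_leq _ _)) // (leq_trans (size_sum _ _ _)) //.
apply/bigmax_leqP => i _.
exact: leq_trans (size_scale_leq _ _) (size_gfpoly _ _).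
Qed.

Lemma gradP_poly_top_coef_neq0 (k : nat) (p : 'S_k) : (2 <= k)%N ->
  exists b, (gradP_poly p b)`_(k - 2) != 0.
Proof.
move=> k2; have [b Qb] := poly_neq0_horner (perm_comb_gfpoly_neq0 p k2).
exists b; rewrite coefZ mulf_neq0 ?natr_fact_neq0 // coef_sum.
move: Qb; rewrite horner_sum; congr (_ != 0); apply: eq_bigr => i _.
by rewrite hornerZ coefZ mulrC.
Qed.

End GradientFactors.

Section RealGradient.
Variable R : realType.

Lemma gfactor_gfpoly (k i : nat) (x : R) : (i < k)%N ->
  gfactor k i.+1 x / ((i`!)%:R * ((k - i.+1)`!)%:R) = (gfpoly R k i).[x].
Proof.
move=> ik; rewrite /gfactor /gfpoly mulrBl hornerD hornerN subSS subn0.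
congr (_ - _).
  have [ik1|ki] := ltnP i.+1 k; last first.
    by rewrite bern_out // horner0 (_ : k - i.+1 = 0)%N ?mul0r //; lia.
  rewrite horner_bern // (_ : k - i.+1 = (k - 2 - i).+1)%N; last by lia.
  rewrite subSS subn0 factS natrM; field.
  by rewrite !natr_fact_neq0 addrC natr1 pnatr_eq0.
case: i ik => [|i] ik; first by rewrite !mul0r horner0.
rewrite horner_bern // (_ : k - i.+2 = k - 2 - i)%N; last by lia.
rewrite !subSS subn0 factS natrM; field.
by rewrite !natr_fact_neq0 addrC natr1 pnatr_eq0.
Qed.

Lemma horner_gradP_poly (k : nat) (p : 'S_k) (a b : R) :
  (gradP_poly p b).[a] = gradP p a b.
Proof.
rewrite /gradP_poly /gradP hornerZ horner_sum; congr (_ * _).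
apply: eq_bigr => i _; rewrite hornerZ mulrC -!gfactor_gfpoly //.
field; by rewrite !natr_fact_neq0.
Qed.

End RealGradient.

Lemma gradPa_comb_neq0 (R : realType) (m : nat) (pi : nat -> anyperm)
    (t : nat -> R) :
  (0 < m)%N -> (2 <= pord (pi 0%N))%N -> t 0%N != 0 ->
  (forall i, (0 < i < m)%N -> (pord (pi i) < pord (pi 0%N))%N) ->
  exists a b, \sum_(i < m) t i * gradPa (pi i) a b != 0.
Proof.
move=> m0 ord2 t0 ord_lt.
have [b top_b] := gradP_poly_top_coef_neq0 R (projT2 (pi 0%N)) ord2.
pose S := \sum_(i < m) t i *: gradP_poly (projT2 (pi i)) b.
have S_top : S`_(pord (pi 0%N) - 2) =
    t 0%N * (gradP_poly (projT2 (pi 0%N)) b)`_(pord (pi 0%N) - 2).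
  rewrite coef_sum (bigD1 (Ordinal m0)) //= big1 ?addr0 ?coefZ // => i i0.
  rewrite coefZ nth_default ?mulr0 // (leq_trans (size_gradP_poly _ _)) //.
  have /ord_lt : (0 < i < m)%N.
    rewrite ltn_ord andbT lt0n.
    by apply: contraNneq i0 => i_eq0; apply/eqP/val_inj.
  by rewrite /pord; lia.
have S_neq0 : S != 0.
  by apply: contraTneq (mulf_neq0 t0 top_b) => S0; rewrite -S_top S0 coef0 eqxx.
have [a Sa] := poly_neq0_horner S_neq0.
exists a, b; move: Sa; rewrite horner_sum.
by under eq_bigr do rewrite hornerZ horner_gradP_poly.
Qed.

Theorem lemma11 (R : realType) (m : nat) (pi : nat -> anyperm) (t : nat -> R) :
  (1 <= m)%N ->
  (forall i, (i < m)%N -> (2 <= pord (pi i))%N) ->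
  (forall i j, (i <= j < m)%N -> (pord (pi j) <= pord (pi i))%N) ->
  (forall i, (i < m)%N -> t i != 0) ->
  (forall a b : R, \sum_(i < m) t i * gradPa (pi i) a b = 0) ->
  (2 <= m)%N /\ pord (pi 0%N) = pord (pi 1%N).
Proof.
move=> m1 ord2 ord_mono t_neq0 sum0.
have no_strict_top :
    ~ (forall i, (0 < i < m)%N -> (pord (pi i) < pord (pi 0%N))%N).
  move=> ord_lt.
  have [a [b]] := gradPa_comb_neq0 m1 (ord2 0%N m1) (t_neq0 0%N m1) ord_lt.
  by rewrite sum0 eqxx.
have m2 : (2 <= m)%N.
  by rewrite leqNgt; apply/negP => m_lt2; apply: no_strict_top => i; lia.
have ord10 : (pord (pi 1%N) <= pord (pi 0%N))%N by apply: ord_mono; lia.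
split=> //; apply/eqP; rewrite eqn_leq ord10 andbT leqNgt.
apply/negP => ord_lt10; apply: no_strict_top => i /andP [i0 im].
have /ord_mono ord_i1 : (1 <= i < m)%N by rewrite i0 im.
exact: leq_ltn_trans ord_i1 ord_lt10.
Qed.
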